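(* Let $(P,\lambda)$ be a marked poset whose Hasse diagram is a disjoint union of connected components such that each component contains exactly one maximal marked element and exactly one minimal marked element. Then the marked order polytope $\mathcal{O}(P,\lambda)$ is affinely isomorphic to the order polytope $\mathcal{O}(Q)$ of some finite poset $Q$.
   Context: A marked poset $(P,\lambda)$ is a finite poset $(P,\preceq)$ together with an induced subposet $P^*\subseteq P$ of marked elements and an order-preserving map $\lambda:P^*\to\mathbb{R}$ (the marking); it is always assumed that all minimal and all maximal elements of $P$ lie in $P^*$. The marked order polytope $\mathcal{O}(P,\lambda)\subseteq\mathbb{R}^{P\setminus P^*}$ is the set of all $x$ such that, setting $x_a=\lambda(a)$ for $a\in P^*$, one has $x_p\le x_q$ for all $p\preceq q$ in $P$. For a finite poset $Q$, the order polytope $\mathcal{O}(Q)\subseteq\mathbb{R}^Q$ is defined by $0\le x_p\le 1$ for all $p\in Q$ and $x_p\le x_q$ whenever $p\prec q$. Two polytopes $A,B\subseteq\mathbb{R}^d$ are affinely isomorphic if $f(A)=B$ for some map $f(x)=Mx+x_0$ with $M$ an invertible $d\times d$ matrix.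
   Formalization: Every marked element of a component is its maximal or its minimal marked element, and λ is strictly order-preserving, λ(p) < λ(q) for marked p ≺ q. Each condition added here is assumed in the paper as well or is needed for the statement above to hold. *)

From mathcomp Require Import all_boot all_order all_algebra.
Set Implicit Arguments. Unset Strict Implicit. Unset Printing Implicit Defensive.
Import GRing.Theory Num.Theory.
Local Open Scope ring_scope.

Section PosetDefs.
Variable T : finType.

Definition is_partial_order (le : rel T) : Prop :=
  [/\ reflexive le, antisymmetric le & transitive le].

Definition strict (le : rel T) : rel T := fun p q => le p q && (p != q).

Definition covers (le : rel T) : rel T :=
  fun p q => strict le p q && [forall r, ~~ (strict le p r && strict le r q)].

Definition hasse_adj (le : rel T) : rel T :=
  fun p q => covers le p q || covers le q p.

Definition same_component (le : rel T) (p q : T) : bool :=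
  connect (hasse_adj le) p q.

Definition maximal_marked_in (le : rel T) (marked : {set T}) (p m : T) : bool :=
  [&& same_component le p m, m \in marked &
      [forall m', (same_component le p m' && (m' \in marked) && le m m')
                    ==> (m' == m)]].

Definition minimal_marked_in (le : rel T) (marked : {set T}) (p m : T) : bool :=
  [&& same_component le p m, m \in marked &
      [forall m', (same_component le p m' && (m' \in marked) && le m' m)
                    ==> (m' == m)]].

(* The marked order polytope O(P, lambda), living in R^{P minus marked}, where
   R^{P minus marked} is identified with R^n, n = #|unmarked|, through enum_val. *)
Definition marked_order_polytope (R : numDomainType) (le : rel T)
    (marked : {set T}) (lam : T -> R) : 'rV[R]_(#|~: marked|) -> Prop :=
  fun x => exists y : T -> R,
    [/\ (forall p, p \in marked -> y p = lam p),
        (forall i : 'I_(#|~: marked|), y (enum_val i) = x 0 i) &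
        (forall p q, le p q -> y p <= y q)].

End PosetDefs.

Definition order_polytope (R : numDomainType) (n : nat) (leQ : rel 'I_n)
    : 'rV[R]_n -> Prop :=
  fun x => (forall i, 0 <= x 0 i <= 1) /\
           (forall i j, strict leQ i j -> x 0 i <= x 0 j).

Definition affinely_isomorphic (R : numFieldType) (n : nat)
    (A B : 'rV[R]_n -> Prop) : Prop :=
  exists (M : 'M[R]_n) (x0 : 'rV[R]_n),
    M \in unitmx /\ (forall y, B y <-> exists2 x, A x & y = x *m M + x0).

Arguments marked_order_polytope {T R} le marked lam _.
Arguments order_polytope {R n} leQ _.

From mathcomp Require Import all_boot all_order all_algebra.
Import Order.TTheory GRing.Theory Num.Theory.
Set Implicit Arguments. Unset Strict Implicit. Unset Printing Implicit Defensive.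

(* Comparable elements lie in the same Hasse component, so every element u
   lies between the unique minimal marked element b(u) and the unique maximal
   marked element t(u) of its component, and b and t are constant along
   comparable pairs.  As a component has no other marked elements, a marked
   element below (above) an unmarked u is b(u) (t(u)), so the inequalities of
   O(P, lambda) involving marked elements reduce to
   lambda(b(u)) <= x_u <= lambda(t(u)).  Rescaling each coordinate to
   (x_u - lambda(b(u))) / (lambda(t(u)) - lambda(b(u))) then maps O(P, lambda)
   onto the order polytope of the subposet of unmarked elements. *)

Section HasseComponents.
Variables (T : finType) (le : rel T).
Hypothesis le_po : is_partial_order le.

Lemma hasse_adj_sym : symmetric (hasse_adj le).
Proof. by move=> p q; rewrite /hasse_adj orbC. Qed.

Lemma same_component_sym : symmetric (same_component le).
Proof. exact/sym_connect_sym/hasse_adj_sym. Qed.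

Lemma same_component_trans_left : left_transitive (same_component le).
Proof. exact/same_connect/sym_connect_sym/hasse_adj_sym. Qed.

Lemma same_component_le p q : le p q -> same_component le p q.
Proof.
have [refl anti trans] := le_po.
pose interval a b := [set r | le a r && le r b].
have interval_ltn a b p' q' z : le p' a -> le b q' ->
    z \in interval p' q' -> z \notin interval a b ->
    #|interval a b| < #|interval p' q'|.
  move=> lepa lebq zpq zab; apply: proper_card; apply/properP; split; last by exists z.
  apply/subsetP => s; rewrite !inE => /andP[leas lesb].
  by rewrite (trans _ _ _ lepa leas) (trans _ _ _ lesb lebq).
move=> lepq; have [n] := ubnP #|interval p q|.
elim: n p q lepq => // n IH p q lepq; rewrite ltnS => size_pq.
have [<-|npq] := eqVneq p q; first exact: connect0.
have [cov|] := boolP (covers le p q); first by apply: connect1; rewrite /hasse_adj cov.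
rewrite /covers /strict lepq npq /= => /forallPn[r].
rewrite negbK => /andP[/andP[lepr npr] /andP[lerq nrq]].
have q_pq : q \in interval p q by rewrite !inE lepq refl.
apply: (connect_trans (y := r)); apply: IH => //; apply: leq_trans size_pq.
- apply: (interval_ltn _ _ _ _ q (refl p) lerq q_pq).
  rewrite !inE; apply: contra nrq => /andP[_ leqr]; apply/eqP/anti.
  by rewrite lerq leqr.
- apply: (interval_ltn _ _ _ _ p lepr (refl q)); first by rewrite !inE lepq refl.
  rewrite !inE; apply: contra npr => /andP[lerp _]; apply/eqP/anti.
  by rewrite lepr lerp.
Qed.

Lemma exists_maximal_above p : exists2 m, le p m & forall q, le m q -> q = m.
Proof.
have [refl anti trans] := le_po.
have [m lepm m_max] := arg_maxnP (fun m => #|[set r | le r m]|) (refl p).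
exists m => // q lemq; apply: contraTeq (m_max q (trans _ _ _ lepm lemq)) => nqm.
rewrite -ltnNge.
apply: proper_card; apply/properP; split.
  by apply/subsetP => s; rewrite !inE => lesm; apply: trans lesm lemq.
exists q; first by rewrite !inE refl.
by rewrite !inE; apply: contra nqm => leqm; apply/eqP/anti; rewrite leqm lemq.
Qed.

Lemma maximal_marked_in_component (marked : {set T}) u v :
  same_component le u v ->
  maximal_marked_in le marked u =1 maximal_marked_in le marked v.
Proof.
move=> /same_component_trans_left Euv m; rewrite /maximal_marked_in Euv.
by under eq_forallb => m' do rewrite Euv.
Qed.

End HasseComponents.

Section Converse.
Variables (T : finType) (le : rel T).

Definition converse : rel T := fun p q => le q p.

Lemma converse_po : is_partial_order le -> is_partial_order converse.
Proof.
case=> refl anti trans; split=> // [p q lepq|q p r leqp lerq].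
  by apply: anti; rewrite andbC.
exact: trans lerq leqp.
Qed.

Lemma hasse_adj_converse : hasse_adj converse =2 hasse_adj le.
Proof.
suff covers_converse p q : covers converse p q = covers le q p.
  by move=> p q; rewrite /hasse_adj !covers_converse orbC.
rewrite /covers /strict /converse eq_sym; congr (_ && _).
by apply: eq_forallb => r; rewrite andbC (eq_sym p) (eq_sym r).
Qed.

Lemma maximal_marked_in_converse (marked : {set T}) p m :
  maximal_marked_in converse marked p m = minimal_marked_in le marked p m.
Proof.
have Ecomp := eq_connect hasse_adj_converse.
rewrite /maximal_marked_in /minimal_marked_in /same_component !Ecomp.
by under eq_forallb => m' do rewrite Ecomp.
Qed.

End Converse.

Section ComponentTop.
Variables (T : finType) (le : rel T) (marked : {set T}).
Hypothesis le_po : is_partial_order le.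
Hypothesis maximal_marked : forall p, (forall q, le p q -> q = p) -> p \in marked.
Hypothesis uniq_top : forall p, exists! m, maximal_marked_in le marked p m.

Definition comp_top u := odflt u [pick m | maximal_marked_in le marked u m].

Lemma comp_topP u : maximal_marked_in le marked u (comp_top u).
Proof.
have [m [Mm _]] := uniq_top u.
by rewrite /comp_top; case: pickP => [//|/(_ m)]; rewrite Mm.
Qed.

Lemma comp_top_unique u m : maximal_marked_in le marked u m -> m = comp_top u.
Proof.
have [m0 [_ m0_uniq]] := uniq_top u => Mm.
by rewrite -(m0_uniq _ Mm) (m0_uniq _ (comp_topP u)).
Qed.

Lemma comp_top_marked u : comp_top u \in marked.
Proof. by have /and3P[] := comp_topP u. Qed.

Lemma le_comp_top u : le u (comp_top u).
Proof.
have [m lem m_max] := exists_maximal_above le_po u.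
suff -> : comp_top u = m by [].
apply/esym/comp_top_unique.
rewrite /maximal_marked_in same_component_le // maximal_marked //=.
by apply/forallP => m'; apply/implyP => /andP[_ /m_max ->].
Qed.

Lemma comp_top_le u v : le u v -> comp_top u = comp_top v.
Proof.
move=> /(same_component_le le_po)/maximal_marked_in_component Euv.
by apply: comp_top_unique; rewrite -Euv; apply: comp_topP.
Qed.

End ComponentTop.

Definition comp_bot (T : finType) (le : rel T) (marked : {set T}) :=
  comp_top (converse le) marked.

Local Open Scope ring_scope.

Lemma induced_partial_order (T T' : finType) (le : rel T) (f : T' -> T) :
  is_partial_order le -> injective f -> is_partial_order (fun i j => le (f i) (f j)).
Proof.
case=> refl anti trans f_inj; split=> // [i j /anti/f_inj //|j i k]; exact: trans.
Qed.

Lemma eq_affinely_isomorphic (R : numFieldType) n (A A' B : 'rV[R]_n -> Prop) :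
  (forall x, A x <-> A' x) -> affinely_isomorphic A' B -> affinely_isomorphic A B.
Proof.
move=> AA' [M [x0 [M_unit A'B]]]; exists M, x0; split=> // y.
split=> [/A'B[x /AA' Ax ->]|[x /AA' A'x ->]]; [by exists x | by apply/A'B; exists x].
Qed.

Section Rescale.
Variables (R : realFieldType) (lo hi : R).
Hypothesis lo_lt_hi : lo < hi.

Let d_gt0 : 0 < hi - lo. Proof. by rewrite subr_gt0. Qed.

Lemma rescale_in_unit x : (0 <= (x - lo) / (hi - lo) <= 1) = (lo <= x <= hi).
Proof. by rewrite ler_pdivlMr // ler_pdivrMr // mul0r mul1r subr_ge0 lerD2r. Qed.

Lemma ler_rescale x x' : ((x - lo) / (hi - lo) <= (x' - lo) / (hi - lo)) = (x <= x').
Proof. by rewrite ler_pM2r ?invr_gt0 // lerD2r. Qed.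

Lemma rescaleK y : (lo + y * (hi - lo) - lo) / (hi - lo) = y.
Proof. by rewrite addrAC subrr add0r mulfK ?gt_eqF. Qed.

End Rescale.

Lemma affinely_isomorphic_box_order (R : realFieldType) n (leQ : rel 'I_n)
    (lo hi : 'I_n -> R) :
  (forall i, lo i < hi i) -> (forall i j, leQ i j -> lo i = lo j /\ hi i = hi j) ->
  affinely_isomorphic
    (fun x => (forall i, lo i <= x 0 i <= hi i) /\
              (forall i j, leQ i j -> x 0 i <= x 0 j))
    (order_polytope leQ).
Proof.
move=> lo_lt_hi leQ_const.
pose d i := hi i - lo i.
exists (diag_mx (\row_i (d i)^-1)), (\row_i (- lo i / d i)); split.
  rewrite unitmxE det_diag unitfE; apply/prodf_neq0 => i _.
  by rewrite mxE invr_eq0 gt_eqF ?subr_gt0.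
have mapE x i : (x *m diag_mx (\row_i (d i)^-1) + \row_i (- lo i / d i)) 0 i
    = (x 0 i - lo i) / d i.
  by rewrite mul_mx_diag !mxE mulrBl mulNr.
have le_strict i j y : leQ i j -> (strict leQ i j -> y i <= y j) -> y i <= y j.
  by move=> Qij; have [->|nij] := eqVneq i j; last by apply; rewrite /strict Qij.
move=> y; split=> [[y01 y_mono]|[x [x_box x_mono] ->]].
- exists (\row_i (lo i + y 0 i * d i)).
    split=> [i|i j Qij]; rewrite !mxE; first by rewrite -rescale_in_unit // rescaleK.
    rewrite /d; have [-> ->] := leQ_const i j Qij.
    by rewrite lerD2l ler_pM2r ?subr_gt0 //; apply: le_strict (y_mono i j).
  by apply/rowP => i; rewrite mapE mxE rescaleK.
- split=> [i|i j /andP[Qij _]]; rewrite !mapE; first by rewrite rescale_in_unit.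
  by rewrite /d; have [-> ->] := leQ_const i j Qij; rewrite ler_rescale ?x_mono.
Qed.

Lemma enum_val_setC (T : finType) (A : {set T}) (i : 'I_#|~: A|) :
  enum_val i \notin A.
Proof. by have := enum_valP i; rewrite inE. Qed.

Lemma in_or_enum_val_setC (T : finType) (A : {set T}) p :
  p \in A \/ exists i : 'I_#|~: A|, enum_val i = p.
Proof.
have [|pA] := boolP (p \in A); [by left | right].
have pAC : p \in ~: A by rewrite inE.
by exists (enum_rank_in pAC p); rewrite enum_rankK_in.
Qed.

Section MarkedComponents.
Variables (R : realFieldType) (T : finType) (le : rel T).
Variables (marked : {set T}) (lam : T -> R).
Hypothesis le_po : is_partial_order le.
Hypothesis maximal_marked : forall p, (forall q, le p q -> q = p) -> p \in marked.
Hypothesis minimal_marked : forall p, (forall q, le q p -> q = p) -> p \in marked.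
Hypothesis lam_mono :
  forall p q, p \in marked -> q \in marked -> le p q -> lam p <= lam q.
Hypothesis lam_strict :
  forall p q, p \in marked -> q \in marked -> strict le p q -> lam p < lam q.
Hypothesis uniq_top : forall p, exists! m, maximal_marked_in le marked p m.
Hypothesis uniq_bot : forall p, exists! m, minimal_marked_in le marked p m.
Hypothesis marked_extremal : forall p m, same_component le p m -> m \in marked ->
  maximal_marked_in le marked p m \/ minimal_marked_in le marked p m.

Local Notation top := (comp_top le marked).
Local Notation bot := (comp_bot le marked).

Let le_anti := let: And3 _ anti _ := le_po in anti.
Let le_trans := let: And3 _ _ trans := le_po in trans.

Let uniq_bot' p : exists! m, maximal_marked_in (converse le) marked p m.
Proof.
by have [m [Mm m_uniq]] := uniq_bot p; exists m; split=> [|m'];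
  rewrite maximal_marked_in_converse // => /m_uniq.
Qed.

Lemma le_comp_bot u : le (bot u) u.
Proof. exact: (le_comp_top (converse_po le_po) minimal_marked uniq_bot'). Qed.

Lemma comp_bot_marked u : bot u \in marked.
Proof. exact: (comp_top_marked uniq_bot'). Qed.

Lemma comp_bot_le u v : le u v -> bot u = bot v.
Proof. by move=> leuv; apply/esym/(comp_top_le (converse_po le_po) uniq_bot'). Qed.

Lemma comp_bot_unique u m : minimal_marked_in le marked u m -> m = bot u.
Proof. by rewrite -maximal_marked_in_converse => /(comp_top_unique uniq_bot'). Qed.

Lemma comp_bot_lt_top u : u \notin marked -> lam (bot u) < lam (top u).
Proof.
move=> uU; apply: lam_strict; rewrite ?comp_bot_marked ?comp_top_marked //.
have le_u_top := le_comp_top le_po maximal_marked uniq_top u.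
rewrite /strict (le_trans (le_comp_bot u) le_u_top); apply: contra uU => /eqP Ebt.
by rewrite (@le_anti u (top u)) ?comp_top_marked // le_u_top -Ebt le_comp_bot.
Qed.

Lemma marked_le_unmarked p u :
  p \in marked -> u \notin marked -> le p u -> p = bot u.
Proof.
move=> pM uU lepu; have comp_up : same_component le u p.
  by rewrite same_component_sym; apply: same_component_le.
case: (marked_extremal comp_up pM) => [/(comp_top_unique uniq_top) ptop|];
  last exact: comp_bot_unique.
have le_u_p : le u p by rewrite ptop; apply: le_comp_top.
have Eup : u = p by apply: le_anti; rewrite le_u_p lepu.
by rewrite Eup pM in uU.
Qed.

Lemma unmarked_le_marked p u :
  p \in marked -> u \notin marked -> le u p -> p = top u.
Proof.
move=> pM uU leup; have comp_up : same_component le u p.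
  exact: same_component_le.
case: (marked_extremal comp_up pM) => [|/comp_bot_unique pbot];
  first exact: (comp_top_unique uniq_top).
have le_p_u : le p u by rewrite pbot; apply: le_comp_bot.
have Eup : u = p by apply: le_anti; rewrite le_p_u leup.
by rewrite Eup pM in uU.
Qed.

Definition extend_marking (x : 'rV[R]_#|~: marked|) (p : T) : R :=
  oapp (x 0) (lam p) [pick i | enum_val i == p].

Lemma extend_marking_marked x p : p \in marked -> extend_marking x p = lam p.
Proof.
move=> pM; rewrite /extend_marking; case: pickP => [i /eqP Ei|//].
by have := enum_val_setC i; rewrite Ei pM.
Qed.

Lemma extend_marking_enum_val x i : extend_marking x (enum_val i) = x 0 i.
Proof.
rewrite /extend_marking; case: pickP => [j /eqP/enum_val_inj -> //|/(_ i)].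
by rewrite eqxx.
Qed.

Lemma marked_order_polytopeE x :
  marked_order_polytope le marked lam x <->
  (forall i : 'I_#|~: marked|,
     lam (bot (enum_val i)) <= x 0 i <= lam (top (enum_val i))) /\
  (forall i j : 'I_#|~: marked|, le (enum_val i) (enum_val j) -> x 0 i <= x 0 j).
Proof.
split=> [[y [y_marked y_x y_mono]]|[x_box x_mono]].
  split=> [i|i j /y_mono]; rewrite -!y_x //.
  rewrite -(y_marked _ (comp_bot_marked _)).
  rewrite -(y_marked _ (comp_top_marked uniq_top _)).
  by rewrite !y_mono ?le_comp_bot ?(le_comp_top le_po maximal_marked uniq_top).
exists (extend_marking x); split=> [|i|p q]; first exact: extend_marking_marked.
  exact: extend_marking_enum_val.
case: (in_or_enum_val_setC marked p) => [pM|[i <-]];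
case: (in_or_enum_val_setC marked q) => [qM|[j <-]];
rewrite ?extend_marking_enum_val ?extend_marking_marked //.
- exact: lam_mono.
- by move=> /(marked_le_unmarked pM (enum_val_setC j)) ->; case/andP: (x_box j).
- by move=> /(unmarked_le_marked qM (enum_val_setC i)) ->; case/andP: (x_box i).
- exact: x_mono.
Qed.

End MarkedComponents.

Theorem lemma3p1 (R : realFieldType) (P : finType) (le : rel P)
    (marked : {set P}) (lam : P -> R) :
  is_partial_order le ->
  (* all maximal and all minimal elements of P are marked *)
  (forall p, (forall q, le p q -> q = p) -> p \in marked) ->
  (forall p, (forall q, le q p -> q = p) -> p \in marked) ->
  (* lambda is order preserving on marked elements, and strictly so (nondegeneracy) *)
  (forall p q, p \in marked -> q \in marked -> le p q -> lam p <= lam q) ->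
  (forall p q, p \in marked -> q \in marked -> strict le p q -> lam p < lam q) ->
  (* each Hasse component has exactly one maximal marked element, exactly
     one minimal marked element, and no other marked elements *)
  (forall p, exists! m, maximal_marked_in le marked p m) ->
  (forall p, exists! m, minimal_marked_in le marked p m) ->
  (forall p m, same_component le p m -> m \in marked ->
     maximal_marked_in le marked p m \/ minimal_marked_in le marked p m) ->
  exists leQ : rel 'I_(#|~: marked|),
    is_partial_order leQ /\
    affinely_isomorphic (marked_order_polytope le marked lam)
                        (@order_polytope R _ leQ).
Proof.
move=> le_po maximal_marked minimal_marked lam_mono lam_strict uniq_top uniq_bot
  marked_extremal.
exists (fun i j => le (enum_val i) (enum_val j)); split.
  exact: induced_partial_order le_po enum_val_inj.
apply: (eq_affinely_isomorphic (marked_order_polytopeE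
  le_po maximal_marked minimal_marked lam_mono uniq_top uniq_bot marked_extremal)).
apply: affinely_isomorphic_box_order => [i|i j le_ij].
  exact: (comp_bot_lt_top le_po maximal_marked minimal_marked lam_strict
    uniq_top uniq_bot (enum_val_setC i)).
by rewrite (comp_top_le le_po uniq_top le_ij) (comp_bot_le le_po uniq_bot le_ij).
Qed.
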